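(* Let $c\ge3$ be an integer, let $c'$ be the largest odd integer with $c'\le c$, and let $\mathcal{P}$ be a finite bias distribution. (1) If $E_p[f_{c',x}(p)]=0$ for all $1\le x\le(c'-1)/2$, then $\mathcal{P}$ is $c$-indistinguishable. (2) If $\mathcal{P}$ is $(c'-2)$-indistinguishable and $E_p[f_{c',x_0}(p)]=0$ for at least one $x_0$ with $1\le x_0\le c'-1$, then $\mathcal{P}$ is $c$-indistinguishable. In particular, $\mathcal{P}$ is $c$-indistinguishable if for each odd $\ell$ with $3\le\ell\le c'$ there exists $x_\ell$ with $1\le x_\ell\le\ell-1$ and $E_p[f_{\ell,x_\ell}(p)]=0$.
   Context: A finite bias distribution is a probability distribution $\mathcal{P}$ supported on a finite subset of $(0,1)$ that is symmetric: it outputs $a$ and $1-a$ with the same probability. $E_p$ is expectation over $p\sim\mathcal{P}$. $\sigma(p)=\sqrt{(1-p)/p}$; for integers $\ell\ge1$, $0\le x\le\ell$, $f_{\ell,x}(p)=p^x(1-p)^{\ell-x}(x\sigma(p)-(\ell-x)\sigma(1-p))$ and $R_{\ell,x}=\max\{0,E_p[f_{\ell,x}(p)]\}$. For a positive integer $c$, $\mathcal{P}$ is $c$-indistinguishable if $\sum_{x=1}^{\ell-1}\binom{\ell}{x}R_{\ell,x}=0$ for all $2\le\ell\le c$ (so every such distribution is $1$-indistinguishable). *)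

From HB Require Import structures.
From mathcomp Require Import all_boot all_order all_algebra.
From mathcomp Require Import reals.
Set Implicit Arguments. Unset Strict Implicit. Unset Printing Implicit Defensive.
Import Order.TTheory GRing.Theory Num.Theory.
Local Open Scope ring_scope.

Section Bias.
Variable R : realType.

Definition finite_bias_dist (s : seq R) (w : R -> R) : Prop :=
  [/\ uniq s,
      (forall a, a \in s -> 0 < a < 1),
      (forall a, a \in s -> 0 < w a),
      (forall a, a \in s -> (1 - a) \in s /\ w (1 - a) = w a)
    & \sum_(a <- s) w a = 1].

Definition Ep (s : seq R) (w : R -> R) (g : R -> R) : R :=
  \sum_(a <- s) w a * g a.

Definition sigma (p : R) : R := Num.sqrt ((1 - p) / p).

Definition f_lx (l x : nat) (p : R) : R :=
  p ^+ x * (1 - p) ^+ (l - x) * (x%:R * sigma p - (l - x)%:R * sigma (1 - p)).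

Definition R_lx (s : seq R) (w : R -> R) (l x : nat) : R :=
  Num.max 0 (Ep s w (f_lx l x)).

Definition indist (s : seq R) (w : R -> R) (c : nat) : Prop :=
  forall l : nat, (2 <= l <= c)%N ->
    \sum_(1 <= x < l) 'C(l, x)%:R * R_lx s w l x = 0.

End Bias.

Definition odd_floor (c : nat) : nat := if odd c then c else c.-1.

From HB Require Import structures.
From mathcomp Require Import all_boot all_order all_algebra.
From mathcomp Require Import reals.
From mathcomp Require Import zify ring.
Set Implicit Arguments. Unset Strict Implicit. Unset Printing Implicit Defensive.
Import Order.TTheory GRing.Theory Num.Theory.
Local Open Scope ring_scope.

(* Since p sigma(p) = (1 - p) sigma(1 - p) = sqrt(p (1 - p)), the functions
   f_{l,x} satisfy Pascal's rule f_{l,x} = f_{l+1,x} + f_{l+1,x+1}, and the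
   symmetry of the bias distribution gives E[f_{l,l-x}] = - E[f_{l,x}].
   Call level l null ([Ep_f_eq0]) when E[f_{l,x}] = 0 for all 0 < x < l.  By Pascal's
   rule a null level l+1 makes level l null, while over a null level l the
   values E[f_{l+1,x}] alternate in sign, so one zero at level l+1 makes it
   null; above an odd level the middle value is its own opposite, hence zero.
   c-indistinguishability is exactly nullity of level c, since R_{l,x} = 0
   forces E[f_{l,x}] <= 0 and the symmetry then gives equality.  Every claim
   thus reduces to nullity of level c', which propagates to c <= c' + 1. *)

Section Pascal.
Variable R : realType.
Implicit Types p : R.

Lemma mul_sigma_sym p : 0 < p < 1 -> p * sigma p = (1 - p) * sigma (1 - p).
Proof.
case/andP => p_gt0 p_lt1; have q_gt0 : 0 < 1 - p by rewrite subr_gt0.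
have mul_sqrt a b : 0 < a -> a * Num.sqrt b = Num.sqrt (a ^+ 2 * b).
  by move=> a_gt0; rewrite sqrtrM ?sqr_ge0 // sqrtr_sqr gtr0_norm.
rewrite /sigma subKr !mul_sqrt //; congr Num.sqrt; field.
by rewrite !gt_eqF.
Qed.

Lemma f_lx_pascal (l x : nat) p : 0 < p < 1 -> (x <= l)%N ->
  f_lx l x p = f_lx l.+1 x p + f_lx l.+1 x.+1 p.
Proof.
move=> /mul_sigma_sym sigmaE le_xl; rewrite /f_lx subSn // subSS.
set u := sigma p; set v := sigma (1 - p); set n := (l - x)%N.
have -> : p ^+ x * (1 - p) ^+ n.+1 * (x%:R * u - n.+1%:R * v)
        + p ^+ x.+1 * (1 - p) ^+ n * (x.+1%:R * u - n%:R * v)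
        = p ^+ x * (1 - p) ^+ n * (x%:R * u - n%:R * v)
        + p ^+ x * (1 - p) ^+ n * (p * u - (1 - p) * v).
  by rewrite !exprS -(@natr1 R x) -(@natr1 R n); ring.
by rewrite sigmaE subrr mulr0 addr0.
Qed.

Lemma f_lx_sym (l x : nat) p : (x <= l)%N ->
  f_lx l (l - x) (1 - p) = - f_lx l x p.
Proof. by move=> le_xl; rewrite /f_lx subKn // subKr natrB //; ring. Qed.

End Pascal.

Section Expectation.
Variables (R : realType) (s : seq R) (w : R -> R).
Hypothesis bias : finite_bias_dist s w.
Implicit Types g h : R -> R.

Lemma eq_Ep g h : {in s, g =1 h} -> Ep s w g = Ep s w h.
Proof. by move=> gh; apply: eq_big_seq => a /gh ->. Qed.

Lemma EpD g h : Ep s w (fun p => g p + h p) = Ep s w g + Ep s w h.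
Proof. by rewrite /Ep -big_split; apply: eq_bigr => a _; rewrite mulrDr. Qed.

Lemma EpN g : Ep s w (fun p => - g p) = - Ep s w g.
Proof. by rewrite /Ep -sumrN; apply: eq_bigr => a _; rewrite mulrN. Qed.

Lemma Ep_sym g : Ep s w (fun p => g (1 - p)) = Ep s w g.
Proof.
case: bias => s_uniq _ _ s_sym _.
have s_perm : perm_eq s (map (fun a => 1 - a) s).
  apply: uniq_perm => //.
    by rewrite map_inj_uniq // => a b /(congr1 (fun t => 1 - t)); rewrite !subKr.
  move=> b; apply/idP/mapP => [s_b | [a s_a ->]]; last exact: (s_sym a s_a).1.
  by exists (1 - b); [exact: (s_sym b s_b).1 | rewrite subKr].
rewrite /Ep [RHS](perm_big _ s_perm) big_map.
by apply: eq_big_seq => a s_a; rewrite (s_sym a s_a).2.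
Qed.

Lemma Ep_f_pascal (l x : nat) : (x <= l)%N ->
  Ep s w (f_lx l x) = Ep s w (f_lx l.+1 x) + Ep s w (f_lx l.+1 x.+1).
Proof.
case: bias => _ s_01 _ _ _ le_xl; rewrite -EpD.
by apply: eq_Ep => a s_a; rewrite f_lx_pascal ?s_01.
Qed.

Lemma Ep_f_sym (l x : nat) : (x <= l)%N ->
  Ep s w (f_lx l (l - x)) = - Ep s w (f_lx l x).
Proof.
move=> le_xl; rewrite -Ep_sym -EpN.
by apply: eq_Ep => a _; rewrite f_lx_sym.
Qed.

Definition Ep_f_eq0 (l : nat) : Prop :=
  forall x : nat, (0 < x < l)%N -> Ep s w (f_lx l x) = 0.

Lemma Ep_f_eq0S (l : nat) : Ep_f_eq0 l.+1 -> Ep_f_eq0 l.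
Proof.
move=> null x /andP [x_gt0 lt_xl]; rewrite Ep_f_pascal 1?ltnW //.
by rewrite !null ?addr0 // x_gt0 ltnS ltnW.
Qed.

Lemma Ep_f_eq0_le (m l : nat) : (m <= l)%N -> Ep_f_eq0 l -> Ep_f_eq0 m.
Proof.
elim: l => [|l IH]; first by rewrite leqn0 => /eqP ->.
by rewrite leq_eqVlt => /predU1P [-> // | le_ml] /Ep_f_eq0S; apply: IH.
Qed.

Lemma Ep_f_alternate (l x : nat) : Ep_f_eq0 l -> (x < l)%N ->
  Ep s w (f_lx l.+1 x.+1) = (-1) ^+ x * Ep s w (f_lx l.+1 1).
Proof.
move=> null; elim: x => [|x IH] lt_xl; first by rewrite mul1r.
have /eqP := null x.+1 lt_xl; rewrite Ep_f_pascal 1?ltnW // addrC addr_eq0 => /eqP ->.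
by rewrite IH 1?ltnW // exprS mulN1r mulNr.
Qed.

Lemma Ep_f_eq0_up (l : nat) : Ep_f_eq0 l ->
  (exists x0 : nat, (0 < x0 < l.+1)%N /\ Ep s w (f_lx l.+1 x0) = 0) ->
  Ep_f_eq0 l.+1.
Proof.
move=> null [[|x0] [/andP [//= _ lt_x0l] /eqP]].
rewrite Ep_f_alternate // mulf_eq0 signr_eq0 /= => /eqP Ef1_eq0.
by move=> [|x] /andP [//= _ lt_xl]; rewrite Ep_f_alternate // Ef1_eq0 mulr0.
Qed.

Lemma Ep_f_mid (m : nat) : Ep s w (f_lx m.*2 m) = 0.
Proof.
have := @Ep_f_sym m.*2 m; rewrite -addnn addnK leq_addl => /(_ isT) /esym/eqP.
by rewrite eqNr => /eqP.
Qed.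

Lemma Ep_f_eq0_odd (l : nat) : odd l -> Ep_f_eq0 l -> Ep_f_eq0 l.+1.
Proof.
move=> odd_l null; apply: Ep_f_eq0_up => //; set m := l.+1./2; exists m.
have -> : l.+1 = m.*2 by rewrite -[LHS]odd_double_half /= odd_l.
by rewrite Ep_f_mid -addnn; split => //; lia.
Qed.

Lemma Ep_f_eq0_half (k : nat) :
  (forall x : nat, (0 < x <= k)%N -> Ep s w (f_lx k.*2.+1 x) = 0) ->
  Ep_f_eq0 k.*2.+1.
Proof.
move=> half x /andP [x_gt0 lt_xl]; have [le_xk | lt_kx] := leqP x k.
  by rewrite half ?x_gt0.
rewrite -(subKn (ltnW lt_xl)) Ep_f_sym ?leq_subr // half ?oppr0 //.
by rewrite -addnn in lt_xl *; lia.
Qed.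

Lemma Ep_f_eq0_le0 (l : nat) :
  (forall x : nat, (0 < x < l)%N -> Ep s w (f_lx l x) <= 0) -> Ep_f_eq0 l.
Proof.
move=> le0 x /andP [x_gt0 lt_xl]; apply/eqP; rewrite eq_le le0 ?x_gt0 //=.
rewrite -oppr_le0 -Ep_f_sym 1?ltnW // le0 //.
by rewrite subn_gt0 lt_xl -{2}[l]subn0 ltn_sub2l // (ltn_trans x_gt0).
Qed.

Lemma sum_R_lx_eq0 (l : nat) :
  \sum_(1 <= x < l) 'C(l, x)%:R * R_lx s w l x = 0 <-> Ep_f_eq0 l.
Proof.
have R_ge0 x : 0 <= R_lx s w l x by rewrite le_max lexx.
split => [/eqP | null].
  rewrite psumr_eq0 => [/allP terms_eq0 | x _]; last by rewrite mulr_ge0.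
  apply: Ep_f_eq0_le0 => x /andP [x_gt0 lt_xl].
  have /= := terms_eq0 x; rewrite mem_index_iota x_gt0 lt_xl mulf_eq0 pnatr_eq0.
  by rewrite eqn0Ngt bin_gt0 ltnW // => /(_ isT) /eqP /max_idPl.
rewrite big_nat big1 // => x /null Ef_eq0.
by rewrite /R_lx Ef_eq0 maxxx mulr0.
Qed.

Lemma indistE (c : nat) : indist s w c <-> Ep_f_eq0 c.
Proof.
split => [indist_c | null l /andP [_ le_lc]].
  case: (leqP 2 c) => [le2c | ltc2 x /andP [x_gt0 lt_xc]]; last by lia.
  by apply/sum_R_lx_eq0/indist_c; rewrite le2c leqnn.
by apply/sum_R_lx_eq0; apply: Ep_f_eq0_le null.
Qed.

Lemma Ep_f_eq0_odd_levels (L : nat) :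
  (forall l : nat, odd l -> (3 <= l <= L)%N ->
     exists x : nat, (0 < x < l)%N /\ Ep s w (f_lx l x) = 0) ->
  forall l : nat, odd l -> (l <= L)%N -> Ep_f_eq0 l.
Proof.
move=> zero; elim/ltn_ind => -[|[|[|l]]] // IH odd_l le_lL.
- by move=> x; lia.
- apply: Ep_f_eq0_up; first by apply/Ep_f_eq0_odd/IH => //; lia.
  by apply: zero; rewrite ?le_lL.
Qed.

End Expectation.

Lemma odd_floorP (c : nat) : (0 < c)%N ->
  [/\ odd (odd_floor c), (odd_floor c <= c)%N & (c <= (odd_floor c).+1)%N].
Proof.
rewrite /odd_floor; case: ifP => [-> | even_c]; first by rewrite leqnn leqnSn.
by case: c even_c => // c /= /negbFE odd_c; rewrite odd_c leqnSn leqnn.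
Qed.

Theorem proposition5 (R : realType) (c : nat) (s : seq R) (w : R -> R) :
  (3 <= c)%N -> finite_bias_dist s w ->
  let c' := odd_floor c in
  [/\ (* (1) *)
      ((forall x : nat, (1 <= x <= (c' - 1) %/ 2)%N -> Ep s w (f_lx c' x) = 0) ->
         indist s w c),
      (* (2) *)
      (indist s w (c' - 2) ->
       (exists x0 : nat, (1 <= x0 <= c' - 1)%N /\ Ep s w (f_lx c' x0) = 0) ->
         indist s w c)
    & (* in particular *)
      ((forall l : nat, odd l -> (3 <= l <= c')%N ->
          exists xl : nat, (1 <= xl <= l - 1)%N /\ Ep s w (f_lx l xl) = 0) ->
         indist s w c)].
Proof.
move=> le3c bias c'.
have [odd_c' le_c'c le_cc'] : [/\ odd c', (c' <= c)%N & (c <= c'.+1)%N].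
  by apply: odd_floorP; lia.
have indist_c : Ep_f_eq0 s w c' -> indist s w c.
  by move=> null; apply/(indistE bias)/(Ep_f_eq0_le bias le_cc')/Ep_f_eq0_odd.
split.
- move=> half; apply: indist_c.
  have [k c'E] : exists k, c' = k.*2.+1.
    by exists c'./2; rewrite -[LHS]odd_double_half odd_c' add1n.
  rewrite c'E in half *; apply: Ep_f_eq0_half => // x x_range.
  by apply: half; rewrite -addnn; lia.
- move=> /(indistE bias) null [x0 [x0_range Ef_eq0]]; apply: indist_c.
  have c'E : c' = (c' - 2).+2 by lia.
  have odd_l : odd (c' - 2) by move: odd_c'; rewrite {1}c'E /= negbK.
  rewrite c'E in x0_range Ef_eq0 *; apply: Ep_f_eq0_up (Ep_f_eq0_odd _ _ _) _ => //.
  by exists x0; split => //; lia.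
- move=> zero; apply/indist_c/(Ep_f_eq0_odd_levels bias (L := c')) => //.
  move=> l odd_l l_range; have [x [x_range Ef_eq0]] := zero l odd_l l_range.
  by exists x; split => //; lia.
Qed.
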